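(* Let $\tau=k^{-7}$ and $t=\frac{1}{\tau^2}\big(3\ln(1/\tau)+\ln R\big)+\lceil 4k^2\ln k\rceil\cdot\big\lceil\frac4{\tau^2}\ln(1/\tau)\big\rceil$. Let $h(\vec y)=\mathrm{sgn}(\sum_{i\in[k]}\langle\vec w_i,\vec y_i\rangle-\theta)$ be a halfspace on $\{0,1\}^{kR}$ and let $r\in[k]$ be such that $|C_\tau(\vec w_r)|>t$. Define $\tilde h(\vec y)=\mathrm{sgn}(\sum_{i\in[k]}\langle\tilde{\vec w}_i,\vec y_i\rangle-\theta)$ where $\tilde{\vec w}_r=\mathrm{truncate}(\vec w_r,B_t(\vec w_r))$ and $\tilde{\vec w}_i=\vec w_i$ for $i\neq r$. Then for each $b\in\{0,1\}$, $$\Big|\mathbb E_{\tilde{\mathcal D}_b^R}[\tilde h(\vec y)]-\mathbb E_{\tilde{\mathcal D}_b^R}[h(\vec y)]\Big|\le\frac1{k^2}.$$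
   Context: $\mathrm{sgn}(t)=1$ if $t\ge0$, else $0$. Fix integers $k\ge2$, $R\ge1$ and any distributions $\mathcal D_0,\mathcal D_1$ on $\{0,1\}^k$. Points $\vec y\in\{0,1\}^{kR}$ are $k\times R$ matrices with rows $\vec y_i\in\{0,1\}^R$. $\tilde{\mathcal D}_b^R$: draw the $R$ columns of $\vec x$ independently from $\mathcal D_b$, then independently for each entry set $y_i^{(j)}=x_i^{(j)}$ w.p. $1-1/k^2$ and a fresh uniform bit w.p. $1/k^2$. For $\vec u\in\mathbb R^n$ order indices $i_1,\dots,i_n$ by decreasing $|u^{(i)}|$ (ties by increasing index); $B_t(\vec u)=\{i_1,\dots,i_{\min(t,n)}\}$; $\sigma_m^2=\sum_{j\ge m}|u^{(i_j)}|^2$; the $\tau$-critical index $c_\tau(\vec u)$ is the smallest $m$ with $|u^{(i_m)}|\le\tau\sigma_m$ ($+\infty$ if none); $C_\tau(\vec u)=\{i_1,\dots,i_{c_\tau(\vec u)-1}\}$ if $c_\tau<\infty$, and $[n]$ otherwise. $\mathrm{truncate}(\vec u,S)$ is the vector agreeing with $\vec u$ on coordinates in $S$ and equal to $0$ elsewhere. *)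

From Stdlib Require Import Reals.
From mathcomp Require Import all_boot.

Set Implicit Arguments.
Unset Strict Implicit.
Unset Printing Implicit Defensive.

Local Open Scope R_scope.

Definition sgn (x : R) : R := if Rle_dec 0 x then 1 else 0.

Definition Rfloor (x : R) : Z := Int_part x.
Definition Rceil (x : R) : Z := (- Int_part (- x))%Z.

Definition b2R (b : bool) : R := if b then 1 else 0.

Definition ord_before (n : nat) (u : 'I_n -> R) (i j : 'I_n) : bool :=
  if Rlt_dec (Rabs (u j)) (Rabs (u i)) then true
  else if Req_EM_T (Rabs (u i)) (Rabs (u j)) then (i <= j)%N else false.

Definition sorted_idx (n : nat) (u : 'I_n -> R) : seq 'I_n :=
  sort (@ord_before n u) (enum 'I_n).

Definition B_set (n : nat) (t : nat) (u : 'I_n -> R) : seq 'I_n :=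
  take t (sorted_idx u).

(* sigma_m^2 with m given 0-based as p (i.e. m = p+1):
   sum of |u_{i_j}|^2 over positions j >= p (0-based) *)
Definition sigma2 (n : nat) (u : 'I_n -> R) (p : nat) : R :=
  \big[Rplus/0]_(i <- drop p (sorted_idx u)) (Rabs (u i))^2.

Definition crit_cond (n : nat) (tau : R) (u : 'I_n -> R) (p : nat) : bool :=
  match drop p (sorted_idx u) with
  | i :: _ => if Rle_dec (Rabs (u i)) (tau * sqrt (sigma2 u p))
              then true else false
  | [::] => false
  end.

(* 0-based position of the tau-critical index, i.e. c_tau(u) - 1;
   equals n when c_tau(u) = +infinity *)
Definition crit_pos (n : nat) (tau : R) (u : 'I_n -> R) : nat :=
  find (crit_cond tau u) (iota 0 n).

Definition C_set (n : nat) (tau : R) (u : 'I_n -> R) : seq 'I_n :=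
  take (crit_pos tau u) (sorted_idx u).

Definition truncate (n : nat) (u : 'I_n -> R) (S : seq 'I_n) : 'I_n -> R :=
  fun i => if i \in S then u i else 0.

(* halfspace on {0,1}^{kR}: y is a k x R bit matrix, y (i, j) = y_i^{(j)} *)
Definition halfspace (k m : nat) (w : 'I_k -> 'I_m -> R) (theta : R)
  (y : {ffun 'I_k * 'I_m -> bool}) : R :=
  sgn (\big[Rplus/0]_(i < k) \big[Rplus/0]_(j < m) (w i j * b2R (y (i, j)))
       - theta).

(* probability that the noisy bit equals c given the original bit a:
   keep a w.p. 1 - 1/k^2, else a fresh uniform bit *)
Definition noise (k : nat) (a c : bool) : R :=
  (1 - / (INR k)^2) * (if a == c then 1 else 0) + / (INR k)^2 * / 2.

(* E_{tilde D^R}[f]: columns of x i.i.d. from D, then entrywise noise *)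
Definition Enoisy (k m : nat) (D : {ffun 'I_k -> bool} -> R)
  (f : {ffun 'I_k * 'I_m -> bool} -> R) : R :=
  \big[Rplus/0]_(x : {ffun 'I_k * 'I_m -> bool})
   \big[Rplus/0]_(y : {ffun 'I_k * 'I_m -> bool})
     ((\big[Rmult/1]_(j < m) D [ffun i => x (i, j)])
      * (\big[Rmult/1]_(p : 'I_k * 'I_m) noise k (x p) (y p))
      * f y).

Definition tau_of (k : nat) : R := / (INR k)^7.

Definition t_of (k m : nat) : R :=
  let tau := tau_of k in
  / tau^2 * (3 * ln (/ tau) + ln (INR m))
  + IZR (Rceil (4 * (INR k)^2 * ln (INR k)))
    * IZR (Rceil (4 / tau^2 * ln (/ tau))).

Definition w_tilde (k m : nat) (w : 'I_k -> 'I_m -> R) (r : 'I_k) (t : nat)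
  : 'I_k -> 'I_m -> R :=
  fun i => if i == r then truncate (w r) (B_set t (w r)) else w i.

(* Fix the clean sample [x]. The noisy bits of [y] are then independent and each
   takes any prescribed value with probability at most [1 - 1/(2 k^2)], so a set of
   [y]'s whose points are determined by their coordinates outside some [N] fixed
   positions has probability at most [(1 - 1/(2 k^2))^N <= 1/k^2] once
   [N >= 4 k^2 ln k].
   Before its critical index the squared tail of [w_r] loses a [tau^2] fraction per
   step. Taking every [L]-th index of [B_t] thus yields [N] weights, each at least
   [1/tau] times the next and each dominating, up to a factor [tau + 1/4], the l1 mass
   of [w_r] outside [B_t]. Truncation moves the linear form by at most that mass, so
   two points on which [h] and [h~] disagree and which differ only on the chosen
   coordinates would have linear forms closer than that mass; lacunarity forbids
   this. Hence the disagreement set is determined off the chosen coordinates. *)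

From HB Require Import structures.
From Stdlib Require Import Reals Lra Lia ZArith.
From mathcomp Require Import all_boot.

Set Implicit Arguments.
Unset Strict Implicit.
Unset Printing Implicit Defensive.

Local Open Scope R_scope.

HB.instance Definition _ := Monoid.isComLaw.Build R R0 Rplus
  (fun x y z => esym (Rplus_assoc x y z)) Rplus_comm Rplus_0_l.
HB.instance Definition _ := Monoid.isComLaw.Build R R1 Rmult
  (fun x y z => esym (Rmult_assoc x y z)) Rmult_comm Rmult_1_l.
HB.instance Definition _ := Monoid.isMulLaw.Build R R0 Rmult Rmult_0_l Rmult_0_r.
HB.instance Definition _ :=
  Monoid.isAddLaw.Build R Rmult Rplus Rmult_plus_distr_r Rmult_plus_distr_l.

Section RealSums.
Variable I : Type.
Implicit Types (s : seq I) (P : pred I) (F G : I -> R).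

Lemma sumR_le s P F G : (forall i, P i -> F i <= G i) ->
  \big[Rplus/0]_(i <- s | P i) F i <= \big[Rplus/0]_(i <- s | P i) G i.
Proof. by apply: big_ind2 => *; lra. Qed.

Lemma sumR_ge0 s P F : (forall i, P i -> 0 <= F i) ->
  0 <= \big[Rplus/0]_(i <- s | P i) F i.
Proof. by apply: big_ind => *; lra. Qed.

Lemma prodR_ge0 s P F : (forall i, P i -> 0 <= F i) ->
  0 <= \big[Rmult/1]_(i <- s | P i) F i.
Proof. by apply: big_ind => *; [lra | exact: Rmult_le_pos]. Qed.

Lemma sumR_abs_le s P F :
  Rabs (\big[Rplus/0]_(i <- s | P i) F i) <= \big[Rplus/0]_(i <- s | P i) Rabs (F i).
Proof.
apply: (big_ind2 (fun x y => Rabs x <= y)); first by rewrite Rabs_R0; lra.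
  by move=> a b c d h1 h2; have := Rabs_triang a c; lra.
by move=> *; lra.
Qed.

Lemma sumRB s P F G :
  \big[Rplus/0]_(i <- s | P i) (F i - G i) =
  \big[Rplus/0]_(i <- s | P i) F i - \big[Rplus/0]_(i <- s | P i) G i.
Proof. by rewrite /Rminus big_split (big_morph Ropp Ropp_plus_distr Ropp_0). Qed.

(* AM-GM, termwise: [F i <= F i ^ 2 / (2 lam) + lam / 2]. *)
Lemma sumR_le_sumsq s F lam : 0 < lam ->
  \big[Rplus/0]_(i <- s) F i <=
  \big[Rplus/0]_(i <- s) F i ^ 2 / (2 * lam) + INR (size s) * lam / 2.
Proof.
move=> hlam; elim: s => [|x s IH]; first by rewrite !big_nil /=; lra.
rewrite !big_cons; change (size (x :: s)) with (size s).+1; rewrite S_INR.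
have : 0 <= (F x - lam) ^ 2 / (2 * lam).
  by apply: Rle_mult_inv_pos; [apply: pow2_ge_0 | lra].
have -> : (F x - lam) ^ 2 / (2 * lam) = F x ^ 2 / (2 * lam) + lam / 2 - F x.
  by field; lra.
lra.
Qed.

End RealSums.

Lemma sumR_const_le (J : eqType) (s : seq J) (F : J -> R) c :
  (forall i, i \in s -> F i <= c) ->
  \big[Rplus/0]_(i <- s) F i <= INR (size s) * c.
Proof.
elim: s => [|x s IH] H; first by rewrite big_nil /=; lra.
rewrite big_cons; change (size (x :: s)) with (size s).+1; rewrite S_INR.
have := H x (mem_head x s).
have := IH (fun i hi => H i (mem_behead (s := x :: s) hi)); lra.
Qed.

Section ProductMeasure.
Variables (I : finType) (q : I -> bool -> R) (alpha : R).
Hypothesis q_ge0 : forall p c, 0 <= q p c.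
Hypothesis q_sum1 : forall p, q p true + q p false = 1.
Hypothesis q_le_alpha : forall p c, q p c <= alpha.

Definition prod_mass (y : {ffun I -> bool}) : R := \big[Rmult/1]_p q p (y p).

Definition mass_off (a : I) (y : {ffun I -> bool}) : R :=
  \big[Rmult/1]_(p | p != a) q p (y p).

Definition flip (a : I) (y : {ffun I -> bool}) : {ffun I -> bool} :=
  [ffun p => if p == a then ~~ y p else y p].

Definition determined_off (A : seq I) (F : pred {ffun I -> bool}) : Prop :=
  forall y y', F y -> F y' -> (forall p, p \notin A -> y p = y' p) -> y = y'.

Lemma flipK a : involutive (flip a).
Proof.
by move=> y; apply/ffunP => p; rewrite !ffunE; case: eqP => //= _; rewrite negbK.
Qed.

Lemma flip_at a y : flip a y a = ~~ y a.
Proof. by rewrite ffunE eqxx. Qed.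

Lemma flip_off a y p : p != a -> flip a y p = y p.
Proof. by rewrite ffunE => /negbTE ->. Qed.

Lemma prod_mass_split a y : prod_mass y = q a (y a) * mass_off a y.
Proof. by rewrite /prod_mass (bigD1 a). Qed.

Lemma mass_off_flip a y : mass_off a (flip a y) = mass_off a y.
Proof. by apply: eq_bigr => p pa; rewrite flip_off. Qed.

Lemma prod_mass_ge0 y : 0 <= prod_mass y.
Proof. by apply: prodR_ge0. Qed.

Lemma mass_off_ge0 a y : 0 <= mass_off a y.
Proof. by apply: prodR_ge0. Qed.

Lemma prod_mass_sum1 : \big[Rplus/0]_y prod_mass y = 1.
Proof.
rewrite /prod_mass -(bigA_distr_bigA (fun p c => q p c)).
by rewrite big1 // => p _; rewrite big_bool.
Qed.

Lemma determined_off_flip a A F : determined_off (a :: A) F ->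
  forall y, F y -> ~~ F (flip a y).
Proof.
move=> hF y Fy; apply/negP => Ffy.
have e : y = flip a y.
  apply: hF => // p; rewrite inE negb_or => /andP [pa _]; by rewrite flip_off.
by move: (flip_at a y); rewrite -e; case: (y a).
Qed.

Lemma determined_off_cons a A F : a \notin A -> determined_off (a :: A) F ->
  determined_off A [pred y | F y || F (flip a y)].
Proof.
move=> aA hF y y' Gy Gy' hyy.
have ya : y a = y' a by apply: hyy.
have hoff p : p \notin a :: A -> p != a /\ y p = y' p.
  by rewrite inE negb_or => /andP [pa pA]; split; [|apply: hyy].
case/orP: Gy => Fy; case/orP: Gy' => Fy'.
- by apply: hF Fy Fy' _ => p /hoff [].
- move: ya; rewrite (hF _ _ Fy Fy') ?flip_at; first by case: (y' a).
  by move=> p /hoff [pa ->]; rewrite flip_off.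
- move: ya; rewrite (hF _ _ Fy' Fy) ?flip_at; first by case: (y a).
  by move=> p /hoff [pa <-]; rewrite flip_off.
- apply: (can_inj (flipK a)); apply: hF Fy Fy' _ => p /hoff [pa e].
  by rewrite !flip_off.
Qed.

Lemma mass_le_mass_off a (F : pred {ffun I -> bool}) :
  \big[Rplus/0]_y (prod_mass y * b2R (F y))
  <= alpha * \big[Rplus/0]_y (mass_off a y * b2R (F y)).
Proof.
rewrite big_distrr /=; apply: sumR_le => y _; rewrite (prod_mass_split a) /b2R.
case: (F y); last lra.
rewrite !Rmult_1_r; apply: Rmult_le_compat_r; [exact: mass_off_ge0 | exact: q_le_alpha].
Qed.

(* Summing [q a (y a)] over both values of [y a] integrates the coordinate [a] out. *)
Lemma mass_off_flip_closure a (F : pred {ffun I -> bool}) :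
  (forall y, F y -> ~~ F (flip a y)) ->
  \big[Rplus/0]_y (mass_off a y * b2R (F y))
  = \big[Rplus/0]_y (prod_mass y * b2R (F y || F (flip a y))).
Proof.
move=> hF.
have -> : \big[Rplus/0]_y (prod_mass y * b2R (F y || F (flip a y))) =
    \big[Rplus/0]_y (prod_mass y * b2R (F y))
    + \big[Rplus/0]_y (prod_mass (flip a y) * b2R (F y)).
  rewrite [X in _ + X](reindex_inj (can_inj (flipK a))) -big_split /=.
  apply: eq_bigr => y _; rewrite flipK.
  have := hF y; case: (F y); case: (F (flip a y)) => //= h; try lra.
  by have := h isT.
rewrite -big_split; apply: eq_bigr => y _ /=.
rewrite !(prod_mass_split a) mass_off_flip flip_at.
have := q_sum1 a; case: (y a) => /= h; nra.
Qed.

(* Induction on [A]: integrating out a coordinate [a] costs a factor [alpha], and the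
   set grows to its closure under flipping [a], which is determined off the rest. *)
Lemma prod_mass_determined_off_le (A : seq I) F : uniq A -> determined_off A F ->
  \big[Rplus/0]_y (prod_mass y * b2R (F y)) <= alpha ^ size A.
Proof.
elim: A F => [|a A IH] F /=.
  move=> _ _; rewrite -prod_mass_sum1; apply: sumR_le => y _.
  have := prod_mass_ge0 y; rewrite /b2R; case: (F y); lra.
move=> /andP [aA uA] hF.
have alpha_ge0 : 0 <= alpha by have := q_le_alpha a true; have := q_ge0 a true; lra.
apply: Rle_trans (mass_le_mass_off a F) _.
rewrite (mass_off_flip_closure (determined_off_flip hF)).
by apply: Rmult_le_compat_l => //; apply: IH uA (determined_off_cons aA hF).
Qed.

End ProductMeasure.

Section SquaredTails.
Variables (J : eqType) (s : seq J) (f : J -> R) (j0 : J).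

Definition sqtail p := \big[Rplus/0]_(i <- drop p s) Rabs (f i) ^ 2.
Definition abs_at p := Rabs (f (nth j0 s p)).

Lemma sqtail_ge0 p : 0 <= sqtail p.
Proof. by apply: sumR_ge0 => i _; apply: pow2_ge_0. Qed.

Lemma sqtail_step p : (p < size s)%N -> sqtail p = abs_at p ^ 2 + sqtail p.+1.
Proof. by move=> hp; rewrite /sqtail (drop_nth j0 hp) big_cons. Qed.

Lemma sqtail_le p p' : (p <= p')%N -> sqtail p' <= sqtail p.
Proof.
move=> /subnK <-; elim: (p' - p)%N => [|n IH]; first by rewrite add0n; lra.
apply: Rle_trans IH; rewrite addSn.
case: (ltnP (n + p) (size s)) => hp.
  by rewrite (sqtail_step hp); have := pow2_ge_0 (abs_at (n + p)); lra.
by rewrite /sqtail !drop_oversize ?big_nil //; [lra | exact: leqW].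
Qed.

Lemma abs_at_sq_le p : (p < size s)%N -> abs_at p ^ 2 <= sqtail p.
Proof. by move=> hp; rewrite (sqtail_step hp); have := sqtail_ge0 p.+1; lra. Qed.

Variables (tau : R) (T : nat).
Hypothesis tau_ge0 : 0 <= tau.
Hypothesis tau_le1 : tau <= 1.
Hypothesis T_lt_size : (T < size s)%N.
Hypothesis not_critical : forall p, (p <= T)%N -> tau ^ 2 * sqtail p < abs_at p ^ 2.

(* Before the critical index each term carries a [tau ^ 2] fraction of the tail. *)
Lemma sqtail_decay P j : (P + j <= T.+1)%N ->
  sqtail (P + j) <= (1 - tau ^ 2) ^ j * sqtail P.
Proof.
have tau2 : 0 <= tau ^ 2 <= 1 by split; [apply: pow2_ge_0 | simpl; nra].
elim: j => [|j IH] hj; first by rewrite addn0 /=; lra.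
have hj' : (P + j <= T)%N by rewrite addnS ltnS in hj.
have hs : (P + j < size s)%N by exact: leq_ltn_trans hj' T_lt_size.
have := not_critical hj'; have := IH (leqW hj').
rewrite addnS (sqtail_step hs) /=.
have := sqtail_ge0 (P + j).+1; have := sqtail_ge0 P.
have := pow_le (1 - tau ^ 2) j ltac:(lra).
nra.
Qed.

Lemma abs_at_gt0 p : (p <= T)%N -> 0 < abs_at p.
Proof.
move=> hp; have := not_critical hp; have := sqtail_ge0 p.
have := pow2_ge_0 tau; have := Rabs_pos (f (nth j0 s p)); rewrite /abs_at.
case/Rle_lt_or_eq_dec => // <- /=; nra.
Qed.

Lemma abs_at_lacunary L P P' : (1 - tau ^ 2) ^ L <= tau ^ 4 ->
  (P + L <= P')%N -> (P' <= T)%N -> abs_at P' <= tau * abs_at P.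
Proof.
move=> hL hPP' hP'T.
have hPT : (P + L <= T)%N by exact: leq_trans hPP' hP'T.
have hP : (P <= T)%N by exact: leq_trans (leq_addr _ _) hPT.
have h1 : abs_at P' ^ 2 <= sqtail (P + L).
  apply: Rle_trans (sqtail_le hPP'); apply: abs_at_sq_le.
  exact: leq_ltn_trans hP'T T_lt_size.
have h2 := sqtail_decay (leqW hPT).
have h3 := not_critical hP.
have h4 := sqtail_ge0 P.
have sq : abs_at P' ^ 2 <= (tau * abs_at P) ^ 2.
  have : (1 - tau ^ 2) ^ L * sqtail P <= tau ^ 4 * sqtail P.
    exact: Rmult_le_compat_r.
  rewrite Rpow_mult_distr /=; nra.
apply: Rsqr_incr_0_var; rewrite /Rsqr; first by simpl in sq; lra.
by apply: Rmult_le_pos => //; apply: Rabs_pos.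
Qed.

(* The l1 mass beyond position [T] is bounded through AM-GM by its squared mass,
   which by decay is a [tau ^ 3 / M] fraction of [sqtail P]. *)
Lemma l1_tail_le M P : 1 <= M -> INR (size s) <= M -> (P <= T)%N ->
  (1 - tau ^ 2) ^ (T - P) <= tau ^ 3 / M ->
  \big[Rplus/0]_(i <- drop T s) Rabs (f i) <= (tau + 1 / 4) * abs_at P.
Proof.
move=> hM hsize hPT hdec.
have ha := abs_at_gt0 hPT.
set lam := abs_at P / (2 * M).
have hlam : 0 < lam by apply: Rdiv_lt_0_compat; lra.
apply: Rle_trans (sumR_le_sumsq _ _ hlam) _.
have hQT : sqtail T <= tau ^ 3 / M * sqtail P.
  have e : T = (P + (T - P))%N by rewrite subnKC.
  rewrite {1}e; apply: Rle_trans (sqtail_decay _) _; first by rewrite -e.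
  by apply: Rmult_le_compat_r => //; apply: sqtail_ge0.
have hA : sqtail T / (2 * lam) <= tau * abs_at P.
  rewrite /lam; have hcrit := not_critical hPT.
  have -> : sqtail T / (2 * (abs_at P / (2 * M))) = sqtail T * M / abs_at P.
    by field; lra.
  apply: (Rmult_le_reg_r (abs_at P)) => //.
  have -> : sqtail T * M / abs_at P * abs_at P = sqtail T * M by field; lra.
  have : sqtail T * M <= tau ^ 3 * sqtail P.
    have -> : tau ^ 3 * sqtail P = tau ^ 3 / M * sqtail P * M by field; lra.
    by apply: Rmult_le_compat_r; lra.
  simpl in hcrit |- *; nra.
have hB : INR (size (drop T s)) * lam / 2 <= abs_at P / 4.
  have : INR (size (drop T s)) <= M.
    apply: Rle_trans hsize; apply: le_INR; apply/leP; rewrite size_drop; exact: leq_subr.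
  have -> : abs_at P / 4 = M * lam / 2 by rewrite /lam; field; lra.
  by move=> hn; apply: Rmult_le_compat_r; [lra | apply: Rmult_le_compat_r; lra].
by rewrite /sqtail in hA; lra.
Qed.

End SquaredTails.

Section LacunarySums.
Variables (c d : nat -> R) (beta gamma e : R).
Hypothesis beta_ge0 : 0 <= beta.
Hypothesis d_sign : forall s, d s = 0 \/ Rabs (d s) = 1.

Lemma lacunary_tail_le a n :
  (forall u, (a < u < a + n.+1)%N -> Rabs (c u) <= beta * Rabs (c a)) ->
  Rabs (\big[Rplus/0]_(u <- iota a.+1 n) (c u * d u)) <= INR n * (beta * Rabs (c a)).
Proof.
move=> hc; apply: Rle_trans (sumR_abs_le _ _ _) _.
rewrite -{2}(size_iota a.+1 n); apply: sumR_const_le => u.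
rewrite mem_iota addSnnS => hu; rewrite Rabs_mult.
have := hc u hu; have := Rabs_pos (c u).
by case: (d_sign u) => ->; rewrite ?Rabs_R0; nra.
Qed.

(* The first nonzero term dominates all later ones together. *)
Lemma lacunary_sum_ge a n :
  INR n * beta + gamma <= 1 ->
  (forall s u, (a <= s)%N -> (s < u < a + n)%N -> Rabs (c u) <= beta * Rabs (c s)) ->
  (forall s, (a <= s < a + n)%N -> e <= gamma * Rabs (c s)) ->
  (exists2 s, (a <= s < a + n)%N & d s <> 0) ->
  e <= Rabs (\big[Rplus/0]_(u <- iota a n) (c u * d u)).
Proof.
elim: n a => [|n IH] a hn hc he [s hs ds].
  by move: hs; rewrite addn0 => /andP [h1 h2]; have := leq_trans h2 h1; rewrite ltnn.
rewrite S_INR in hn; rewrite /= big_cons.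
have [da0 | da1] := d_sign a.
- rewrite da0 Rmult_0_r Rplus_0_l; apply: IH; first lra.
  + by move=> s' u hs'; rewrite addSnnS => hu; apply: hc hu; exact: ltnW.
  + by move=> s'; rewrite addSnnS => /andP [h1 h2]; apply: he; rewrite ltnW.
  + exists s => //; rewrite addSnnS; case/andP: hs => h1 ->.
    rewrite andbT ltn_neqAle h1 andbT; apply/eqP => eas; apply: ds.
    by rewrite -eas.
- have ha : (a <= a < a + n.+1)%N by rewrite leqnn addnS ltnS leq_addr.
  have hrest := lacunary_tail_le (fun u => hc a u (leqnn a)).
  have := he a ha; have := Rabs_pos (c a).
  set S := \big[Rplus/0]_(u <- iota a.+1 n) (c u * d u) in hrest *.
  have := Rabs_triang (c a * d a + S) (- S).
  rewrite Rabs_Ropp (_ : c a * d a + S + - S = c a * d a); last by ring.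
  rewrite Rabs_mult da1; nra.
Qed.

End LacunarySums.

Lemma sgn_shift_neq_lt U U' E :
  sgn U <> sgn (U + E) -> sgn U' <> sgn (U' + E) -> Rabs (U - U') < Rabs E.
Proof.
rewrite /sgn; do 4 case: Rle_dec => ? //; move=> h1 h2;
  try (exfalso; lra); rewrite /Rabs; do 2 case: Rcase_abs => ?; lra.
Qed.

Definition linform (k m : nat) (v : 'I_k -> 'I_m -> R)
  (y : {ffun 'I_k * 'I_m -> bool}) : R :=
  \big[Rplus/0]_(i < k) \big[Rplus/0]_(j < m) (v i j * b2R (y (i, j))).

Lemma b2R_sign_diff c c' : b2R c - b2R c' = 0 \/ Rabs (b2R c - b2R c') = 1.
Proof.
case: c; case: c' => /=; rewrite ?Rminus_diag; auto; right;
  by rewrite ?Rminus_0_r ?Rminus_0_l ?Rabs_Ropp Rabs_R1.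
Qed.

Lemma sorted_idx_uniq m (u : 'I_m -> R) : uniq (sorted_idx u).
Proof. by rewrite /sorted_idx sort_uniq enum_uniq. Qed.

Lemma size_sorted_idx m (u : 'I_m -> R) : size (sorted_idx u) = m.
Proof. by rewrite /sorted_idx size_sort size_enum_ord. Qed.

Lemma big_ord_sorted_idx m (u : 'I_m -> R) (F : 'I_m -> R) :
  \big[Rplus/0]_(j < m) F j = \big[Rplus/0]_(j <- sorted_idx u) F j.
Proof. by apply: perm_big; rewrite perm_sym /sorted_idx perm_sort enumT. Qed.

Section Truncation.
Variables (k m : nat) (w : 'I_k -> 'I_m -> R) (theta : R) (r : 'I_k).
Variables (T N : nat) (ch : nat -> 'I_m).

Let sl := sorted_idx (w r).
Let wt := w_tilde w r T.
Let chosen := map ch (iota 0 N).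
Let A := [seq (r, j) | j <- chosen].
Let tail := \big[Rplus/0]_(i <- drop T sl) Rabs (w r i).

Hypothesis chosen_uniq : uniq chosen.
Hypothesis chosen_kept : forall j, j \in chosen -> j \in take T sl.

Definition trunc_err (y : {ffun 'I_k * 'I_m -> bool}) : R :=
  \big[Rplus/0]_(j < m) ((w r j - wt r j) * b2R (y (r, j))).

Lemma w_tilde_other i : i != r -> wt i = w i.
Proof. by rewrite /wt /w_tilde => /negbTE ->. Qed.

Lemma w_tilde_row j : wt r j = if j \in take T sl then w r j else 0.
Proof. by rewrite /wt /w_tilde eqxx /truncate /B_set. Qed.

Lemma mem_chosen_pairs i j : (i, j) \in A -> i = r /\ j \in chosen.
Proof. by case/mapP => j' jin [-> ->]. Qed.

Lemma linform_trunc y : linform w y = linform wt y + trunc_err y.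
Proof.
suff <- : linform w y - linform wt y = trunc_err y by ring.
rewrite /linform -sumRB (bigD1 r) //= [X in _ + X]big1 => [|i ir].
  by rewrite Rplus_0_r /trunc_err -sumRB; apply: eq_bigr => j _; ring.
by rewrite w_tilde_other // -sumRB big1 // => j _; ring.
Qed.

Lemma trunc_err_abs_le y : Rabs (trunc_err y) <= tail.
Proof.
apply: Rle_trans (sumR_abs_le _ _ _) _.
apply: (@Rle_trans _ (\big[Rplus/0]_(j < m)
    (if j \in take T sl then 0 else Rabs (w r j)))).
  apply: sumR_le => j _; rewrite w_tilde_row Rabs_mult; case: ifP => _.
    by rewrite Rminus_diag Rabs_R0; lra.
  rewrite Rminus_0_r; have := Rabs_pos (w r j).
  by case: (y (r, j)); rewrite /= ?Rabs_R0 ?Rabs_R1; lra.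
have disj : ~~ has (mem (take T sl)) (drop T sl).
  have := sorted_idx_uniq (w r); rewrite -/sl -{1}(cat_take_drop T sl) cat_uniq.
  by case/and3P.
rewrite (big_ord_sorted_idx (w r)) -/sl -{1}(cat_take_drop T sl) big_cat /=.
rewrite big1_seq ?Rplus_0_l => [|j /andP [_ ->] //].
apply: Req_le; apply: eq_big_seq => j jd.
by case: ifP => // jt; case/hasP: disj; exists j.
Qed.

Lemma trunc_err_eq_off (y y' : {ffun 'I_k * 'I_m -> bool}) :
  (forall p, p \notin A -> y p = y' p) ->
  trunc_err y = trunc_err y'.
Proof.
move=> hyy; apply: eq_bigr => j _; rewrite w_tilde_row; case: ifP => jB; first by ring.
rewrite hyy //; apply/negP => /mem_chosen_pairs [_ jc]; by rewrite chosen_kept in jB.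
Qed.

Lemma linform_trunc_diff (y y' : {ffun 'I_k * 'I_m -> bool}) :
  (forall p, p \notin A -> y p = y' p) ->
  linform wt y - linform wt y' = \big[Rplus/0]_(s <- iota 0 N)
    (w r (ch s) * (b2R (y (r, ch s)) - b2R (y' (r, ch s)))).
Proof.
move=> hyy; rewrite /linform -sumRB (bigD1 r) //= [X in _ + X]big1 => [|i ir].
  rewrite Rplus_0_r -sumRB (bigID (mem chosen)) /= [X in _ + X]big1 => [|j jn].
    rewrite Rplus_0_r -big_uniq // big_map; apply: eq_big_seq => s sin.
    by rewrite w_tilde_row chosen_kept; [ring | apply: map_f].
  rewrite hyy; first by ring.
  by apply/negP => /mem_chosen_pairs [_ jc]; rewrite jc in jn.
rewrite -sumRB big1 // => j _; rewrite hyy; first by ring.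
by apply/negP => /mem_chosen_pairs [e _]; rewrite e eqxx in ir.
Qed.

Definition disagree (y : {ffun 'I_k * 'I_m -> bool}) : bool :=
  if Req_EM_T (halfspace wt theta y) (halfspace w theta y) then false else true.

Variables (beta gamma : R).
Hypothesis beta_ge0 : 0 <= beta.
Hypothesis chosen_lacunary : forall s u, (s < u)%N -> (u < N)%N ->
  Rabs (w r (ch u)) <= beta * Rabs (w r (ch s)).
Hypothesis tail_dominated : forall s, (s < N)%N -> tail <= gamma * Rabs (w r (ch s)).
Hypothesis beta_gamma_le1 : INR N * beta + gamma <= 1.

(* Truncation shifts both linear forms by the same [trunc_err], so two disagreeing
   points are closer than [tail]; lacunarity forbids this unless they coincide on
   the chosen coordinates. *)
Lemma disagree_chosen_eq (y y' : {ffun 'I_k * 'I_m -> bool}) :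
  disagree y -> disagree y' ->
  (forall p, p \notin A -> y p = y' p) ->
  forall s, (s < N)%N -> y (r, ch s) = y' (r, ch s).
Proof.
rewrite /disagree /halfspace; case: Req_EM_T => // h1 _; case: Req_EM_T => // h2 _ hyy.
have close : Rabs (linform wt y - linform wt y') < tail.
  apply: Rlt_le_trans (trunc_err_abs_le y).
  have -> : linform wt y - linform wt y' =
      (linform wt y - theta) - (linform wt y' - theta) by ring.
  apply: sgn_shift_neq_lt => e.
    by apply: h1; rewrite -[X in _ = sgn (X - _)]/(linform w y) linform_trunc e;
      congr sgn; rewrite /linform; ring.
  by apply: h2; rewrite -[X in _ = sgn (X - _)]/(linform w y') linform_trunc
    -(trunc_err_eq_off hyy) e; congr sgn; rewrite /linform; ring.
move=> s sN; case: (y (r, ch s) =P y' (r, ch s)) => // ne; exfalso.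
suff : tail <= Rabs (linform wt y - linform wt y') by lra.
rewrite linform_trunc_diff //.
apply: (lacunary_sum_ge beta_ge0 (fun s' => b2R_sign_diff _ _) beta_gamma_le1).
- by move=> s1 u _ /andP [su uN]; apply: chosen_lacunary.
- by move=> s1 /andP [_ sN1]; apply: tail_dominated.
- exists s; first by rewrite add0n sN.
  apply: contra_not ne => /Rminus_diag_uniq.
  by case: (y _); case: (y' _) => //= h; lra.
Qed.

Lemma disagree_determined_off : determined_off A disagree.
Proof.
move=> y y' dy dy' hyy; apply/ffunP => [[i j]].
case: (boolP ((i, j) \in A)) => hin; last exact: hyy.
have [-> /mapP [s sin ->]] := mem_chosen_pairs hin.
by apply: disagree_chosen_eq => //; move: sin; rewrite mem_iota.
Qed.

End Truncation.

Lemma one_sub_pow_le_exp x j : 0 <= x <= 1 -> (1 - x) ^ j <= exp (- (x * INR j)).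
Proof.
move=> hx; elim: j => [|j IH]; first by rewrite /= Rmult_0_r Ropp_0 exp_0; lra.
rewrite S_INR /= (_ : - (x * (INR j + 1)) = - x + - (x * INR j)); last by ring.
rewrite exp_plus; apply: Rmult_le_compat => //; [lra | apply: pow_le; lra |].
by have := exp_ineq1_le (- x); lra.
Qed.

Lemma one_sub_pow_le_inv x y j : 0 <= x <= 1 -> 0 < y -> ln y <= x * INR j ->
  (1 - x) ^ j <= / y.
Proof.
move=> hx hy hj; apply: Rle_trans (one_sub_pow_le_exp j hx) _.
rewrite -(exp_ln y hy) -exp_Ropp.
case: (Rle_lt_or_eq_dec _ _ (Ropp_le_contravar _ _ hj)) => h; last by rewrite h; lra.
by apply: Rlt_le; apply: exp_increasing.
Qed.

Lemma Rceil_bounds x : x <= IZR (Rceil x) < x + 1.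
Proof. by rewrite /Rceil opp_IZR; have [h1 h2] := base_Int_part (- x); lra. Qed.

Lemma INR_ceil x : 0 <= x -> INR (Z.to_nat (Rceil x)) = IZR (Rceil x).
Proof.
move=> hx; rewrite INR_IZR_INZ Z2Nat.id //; apply: le_IZR.
by have := Rceil_bounds x; lra.
Qed.

Lemma floor_nat_bounds x : 0 <= x ->
  INR (Z.to_nat (Rfloor x)) <= x /\ x < INR (Z.to_nat (Rfloor x)) + 1.
Proof.
rewrite /Rfloor => hx; have [h1 h2] := base_Int_part x.
have h0 : (0 <= Int_part x)%Z.
  have : (-1 < Int_part x)%Z by apply: lt_IZR; lra.
  lia.
by rewrite INR_IZR_INZ Z2Nat.id //; lra.
Qed.

Lemma ln_le_sub1 x : 0 < x -> ln x <= x - 1.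
Proof.
move=> hx; apply: Rnot_lt_le => hlt.
have := exp_increasing _ _ hlt; rewrite exp_ln //.
by have := exp_ineq1_le (x - 1); lra.
Qed.

(* [t_of k m = X + N_of k * L_of k] ([t_of_split]): [N_of k] coordinates spaced
   [L_of k] apart are chosen, and the [X] further positions make the tail beyond
   [T_of k m] negligible. *)
Definition N_of (k : nat) : nat := Z.to_nat (Rceil (4 * INR k ^ 2 * ln (INR k))).
Definition L_of (k : nat) : nat :=
  Z.to_nat (Rceil (4 / tau_of k ^ 2 * ln (/ tau_of k))).
Definition T_of (k m : nat) : nat := Z.to_nat (Rfloor (t_of k m)).

Section Constants.
Variables k m : nat.
Hypothesis k_ge2 : (2 <= k)%N.
Hypothesis m_ge1 : (1 <= m)%N.

Let K := INR k.
Let tau := tau_of k.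

Lemma K_ge2 : 2 <= K.
Proof. by apply: (le_INR 2 k); apply/leP. Qed.

Lemma tau_bounds : 0 < tau <= 1 / 128.
Proof.
have hK7 : 128 <= K ^ 7.
  have := pow_incr 2 K 7 (conj (ltac:(lra) : 0 <= 2) K_ge2).
  by rewrite (_ : 2 ^ 7 = 128); last ring.
rewrite /tau /tau_of -/K; split; first by apply: Rinv_0_lt_compat; lra.
by rewrite /Rdiv Rmult_1_l; apply: Rinv_le_contravar; lra.
Qed.

Lemma ln_inv_tau_pos : 0 < ln (/ tau).
Proof.
have [h0 h1] := tau_bounds; rewrite -ln_1; apply: ln_increasing; first lra.
rewrite -Rinv_1; apply: Rinv_lt_contravar; lra.
Qed.

Lemma L_bound_pos : 0 < 4 / tau ^ 2 * ln (/ tau).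
Proof.
apply: Rmult_lt_0_compat; last exact: ln_inv_tau_pos.
by apply: Rdiv_lt_0_compat; [lra | apply: pow_lt; case: tau_bounds].
Qed.

Lemma L_ge : 4 / tau ^ 2 * ln (/ tau) <= INR (L_of k).
Proof.
rewrite /L_of INR_ceil; last exact: Rlt_le L_bound_pos.
by case: (Rceil_bounds (4 / tau ^ 2 * ln (/ tau))).
Qed.

Lemma L_ge1 : (1 <= L_of k)%N.
Proof.
by apply/leP; apply: INR_lt; have := L_ge; have := L_bound_pos; rewrite INR_0; lra.
Qed.

Lemma N_bound_ge0 : 0 <= 4 * K ^ 2 * ln K.
Proof.
apply: Rmult_le_pos; first by have := pow2_ge_0 K; lra.
by rewrite -ln_1; apply: Rlt_le; apply: ln_increasing; have := K_ge2; lra.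
Qed.

Lemma N_bounds : 4 * K ^ 2 * ln K <= INR (N_of k) < 4 * K ^ 2 * ln K + 1.
Proof. by rewrite /N_of INR_ceil; [apply: Rceil_bounds | apply: N_bound_ge0]. Qed.

Let X := / tau ^ 2 * (3 * ln (/ tau) + ln (INR m)).

Lemma X_ge0 : 0 <= X.
Proof.
have hm : 0 <= ln (INR m).
  rewrite -ln_1; have h : 1 <= INR m by apply: (le_INR 1 m); apply/leP.
  case: (Rle_lt_or_eq_dec _ _ h) => [h1|<-]; last lra.
  by apply: Rlt_le; apply: ln_increasing; lra.
apply: Rmult_le_pos; last by have := ln_inv_tau_pos; lra.
by apply: Rlt_le; apply: Rinv_0_lt_compat; apply: pow_lt; case: tau_bounds.
Qed.

Lemma t_of_split : t_of k m = X + INR (N_of k) * INR (L_of k).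
Proof.
rewrite /t_of /N_of /L_of -/tau -/X !INR_ceil //.
  exact: Rlt_le L_bound_pos.
exact: N_bound_ge0.
Qed.

Lemma t_of_ge0 : 0 <= t_of k m.
Proof.
rewrite t_of_split; have := X_ge0; have := pos_INR (N_of k); have := pos_INR (L_of k).
nra.
Qed.

Lemma T_le_t : INR (T_of k m) <= t_of k m.
Proof. by case: (floor_nat_bounds t_of_ge0). Qed.

Lemma NL_le_T : (N_of k * L_of k <= T_of k m)%N.
Proof.
rewrite -ltnS; apply/ltP; apply: INR_lt; rewrite S_INR mult_INR.
have [_ h] := floor_nat_bounds t_of_ge0; move: h; rewrite -/(T_of k m) t_of_split.
by have := X_ge0; lra.
Qed.

Lemma L_decay : (1 - tau ^ 2) ^ L_of k <= tau ^ 4.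
Proof.
have [h0 h1] := tau_bounds; have hL := L_ge; have hl := ln_inv_tau_pos.
have htau2 : 0 < tau ^ 2 <= 1.
  by split; [apply: pow_lt | rewrite -(pow1 2); apply: pow_incr]; lra.
have hy : 0 < (/ tau) ^ 4 by apply: pow_lt; apply: Rinv_0_lt_compat.
rewrite -(Rinv_inv (tau ^ 4)) -pow_inv; apply: one_sub_pow_le_inv hy _; first lra.
rewrite ln_pow; last exact: Rinv_0_lt_compat.
have := Rmult_le_compat_l (tau ^ 2) _ _ (Rlt_le _ _ (proj1 htau2)) hL.
rewrite (_ : tau ^ 2 * (4 / tau ^ 2 * ln (/ tau)) = 4 * ln (/ tau)) /=; first lra.
by field; lra.
Qed.

Lemma T_decay P : (P + L_of k <= N_of k * L_of k)%N ->
  (1 - tau ^ 2) ^ (T_of k m - P) <= tau ^ 3 / INR m.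
Proof.
move=> hP; have [h0 h1] := tau_bounds; have hl := ln_inv_tau_pos.
have hM : 1 <= INR m by apply: (le_INR 1 m); apply/leP.
have htau2 : 0 < tau ^ 2 <= 1.
  by split; [apply: pow_lt | rewrite -(pow1 2); apply: pow_incr]; lra.
have hPT : (P <= T_of k m)%N.
  exact: leq_trans (leq_trans (leq_addr _ _) hP) NL_le_T.
have hX : X <= INR (T_of k m - P).
  have [_ hT] := floor_nat_bounds t_of_ge0; move: hT; rewrite -/(T_of k m) t_of_split.
  have := le_INR _ _ (elimT leP hP); rewrite plus_INR mult_INR.
  rewrite minus_INR; last exact/leP.
  by have := L_ge1; move/leP/le_INR; rewrite INR_1 /=; lra.
have hy : 0 < (/ tau) ^ 3 * INR m.
  by apply: Rmult_lt_0_compat; [apply: pow_lt; apply: Rinv_0_lt_compat | lra].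
have -> : tau ^ 3 / INR m = / ((/ tau) ^ 3 * INR m).
  by rewrite Rinv_mult -pow_inv Rinv_inv.
apply: one_sub_pow_le_inv hy _; first lra.
have inv_tau_gt0 : 0 < / tau by apply: Rinv_0_lt_compat.
rewrite ln_mult ?ln_pow //; [|exact: pow_lt | lra].
have := Rmult_le_compat_l (tau ^ 2) _ _ (Rlt_le _ _ (proj1 htau2)) hX.
rewrite /X (_ : forall z, tau ^ 2 * (/ tau ^ 2 * z) = z) /=; first lra.
by move=> z; field; lra.
Qed.

Lemma chosen_weight_le1 : INR (N_of k) * tau + (tau + 1 / 4) <= 1.
Proof.
have hK := K_ge2; have [h0 h1] := tau_bounds; have [_ hN] := N_bounds.
have hN3 : INR (N_of k) <= 4 * K ^ 3.
  have : ln K <= K - 1 by apply: ln_le_sub1; lra.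
  have := pow2_ge_0 K; rewrite /=; nra.
have hK4 : 16 <= K ^ 4.
  have := pow_incr 2 K 4 (conj (ltac:(lra) : 0 <= 2) hK).
  by rewrite (_ : 2 ^ 4 = 16); last ring.
have etau : tau = / K ^ 4 * / K ^ 3 by rewrite /tau /tau_of -/K -Rinv_mult -pow_add.
have hNb : INR (N_of k) * / K ^ 3 <= 4.
  have hb : 0 < / K ^ 3 by apply: Rinv_0_lt_compat; apply: pow_lt; lra.
  have := Rmult_le_compat_r _ _ _ (Rlt_le _ _ hb) hN3.
  by rewrite Rmult_assoc Rinv_r ?Rmult_1_r //; apply: pow_nonzero; lra.
have ha : / K ^ 4 <= / 16 by apply: Rinv_le_contravar; lra.
have ha0 : 0 < / K ^ 4 by apply: Rinv_0_lt_compat; apply: pow_lt; lra.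
have -> : INR (N_of k) * tau = / K ^ 4 * (INR (N_of k) * / K ^ 3) by rewrite etau; ring.
nra.
Qed.

Lemma noise_pow_N_le : (1 - / K ^ 2 * / 2) ^ N_of k <= / Rsqr K.
Proof.
have hK := K_ge2; have [hN _] := N_bounds.
have hK2 : 4 <= K ^ 2 by rewrite /=; nra.
rewrite (_ : Rsqr K = K ^ 2); last by rewrite /Rsqr /=; ring.
have hx0 : 0 <= / K ^ 2 * / 2.
  by apply: Rmult_le_pos; [apply: Rlt_le; apply: Rinv_0_lt_compat|]; lra.
apply: one_sub_pow_le_inv; [split => // | lra |].
  have : / K ^ 2 <= / 4 by apply: Rinv_le_contravar; lra.
  lra.
rewrite ln_pow; last lra.
have := Rmult_le_compat_l _ _ _ hx0 hN.
by rewrite (_ : / K ^ 2 * / 2 * (4 * K ^ 2 * ln K) = 2 * ln K) /=; [lra | field; lra].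
Qed.

End Constants.

Section CriticalIndex.
Variables (m : nat) (u : 'I_m -> R) (tau : R).

Lemma crit_pos_le : (crit_pos tau u <= m)%N.
Proof. by rewrite /crit_pos -[X in (_ <= X)%N](size_iota 0 m) find_size. Qed.

Lemma size_C_set : size (C_set tau u) = crit_pos tau u.
Proof.
by rewrite /C_set size_take size_sorted_idx ltn_neqAle crit_pos_le andbT; case: eqP.
Qed.

Lemma before_crit_pos (j0 : 'I_m) p : 0 <= tau -> (p < crit_pos tau u)%N ->
  tau ^ 2 * sqtail (sorted_idx u) u p < abs_at (sorted_idx u) u j0 p ^ 2.
Proof.
move=> htau hp; have hpm : (p < m)%N := leq_trans hp crit_pos_le.
have := before_find 0%N hp; rewrite nth_iota // add0n.
rewrite /crit_cond (drop_nth j0); last by rewrite size_sorted_idx.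
case: Rle_dec => // /Rnot_le_lt hlt _.
have hQ : 0 <= sigma2 u p by apply: sqtail_ge0.
have h0 : 0 <= tau * sqrt (sigma2 u p) by apply: Rmult_le_pos => //; apply: sqrt_pos.
have := Rsqr_incrst_1 _ _ hlt h0 (Rle_trans _ _ _ h0 (Rlt_le _ _ hlt)).
rewrite /Rsqr -/(sigma2 u p) /abs_at; have := sqrt_sqrt _ hQ.
change (sqtail (sorted_idx u) u p) with (sigma2 u p).
set sq := sqrt _; set a := Rabs _; rewrite /=; nra.
Qed.

End CriticalIndex.

Section Noise.
Variable k : nat.
Hypothesis k_ge2 : (2 <= k)%N.

Lemma inv_sq_bounds : 0 < / INR k ^ 2 <= / 4.
Proof.
have hK := K_ge2 k_ge2; have hK2 : 4 <= INR k ^ 2 by rewrite /=; nra.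
by split; [apply: Rinv_0_lt_compat | apply: Rinv_le_contravar]; lra.
Qed.

Lemma noise_ge0 a c : 0 <= noise k a c.
Proof. by rewrite /noise; have := inv_sq_bounds; case: eqP => _; lra. Qed.

Lemma noise_sum1 a : noise k a true + noise k a false = 1.
Proof. by rewrite /noise; case: a => /=; lra. Qed.

Lemma noise_le a c : noise k a c <= 1 - / INR k ^ 2 * / 2.
Proof. by rewrite /noise; have := inv_sq_bounds; case: eqP => _; lra. Qed.

End Noise.

Lemma column_prod_sum1 (k m : nat) (D : {ffun 'I_k -> bool} -> R) :
  \big[Rplus/0]_x D x = 1 ->
  \big[Rplus/0]_(x : {ffun 'I_k * 'I_m -> bool})
     \big[Rmult/1]_(j < m) D [ffun i => x (i, j)] = 1.
Proof.
move=> hD1.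
pose cols (X : {ffun 'I_m -> {ffun 'I_k -> bool}}) := [ffun p : 'I_k * 'I_m => X p.2 p.1].
have cols_bij : bijective cols.
  exists (fun x : {ffun 'I_k * 'I_m -> bool} => [ffun j => [ffun i => x (i, j)]]).
    by move=> X; apply/ffunP => j; apply/ffunP => i; rewrite !ffunE.
  by move=> x; apply/ffunP => [[i j]]; rewrite !ffunE.
rewrite (reindex cols) /=; last exact: onW_bij.
rewrite (eq_bigr (fun X : {ffun 'I_m -> {ffun 'I_k -> bool}} =>
    \big[Rmult/1]_(j < m) D (X j))) => [|X _]; last first.
  by apply: eq_bigr => j _; congr D; apply/ffunP => i; rewrite !ffunE.
by rewrite -(bigA_distr_bigA (fun _ c => D c)) big1.
Qed.

Lemma Enoisy_sub_abs_le (k m : nat) (D : {ffun 'I_k -> bool} -> R)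
    (f g : {ffun 'I_k * 'I_m -> bool} -> R) eps :
  (forall x, 0 <= D x) -> \big[Rplus/0]_x D x = 1 ->
  (forall x : {ffun 'I_k * 'I_m -> bool},
     Rabs (\big[Rplus/0]_(y : {ffun 'I_k * 'I_m -> bool})
             (\big[Rmult/1]_p noise k (x p) (y p) * (f y - g y))) <= eps) ->
  Rabs (Enoisy D f - Enoisy D g) <= eps.
Proof.
move=> hD0 hD1 hx; rewrite /Enoisy -sumRB.
apply: Rle_trans (sumR_abs_le _ _ _) _.
apply: (@Rle_trans _ (\big[Rplus/0]_(x : {ffun 'I_k * 'I_m -> bool})
    ((\big[Rmult/1]_(j < m) D [ffun i => x (i, j)]) * eps))); last first.
  by rewrite -big_distrl /= column_prod_sum1 //; lra.
apply: sumR_le => x _; rewrite -sumRB.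
set Px := \big[Rmult/1]_(j < m) _.
have hPx : 0 <= Px by apply: prodR_ge0.
rewrite (eq_bigr (fun y : {ffun 'I_k * 'I_m -> bool} =>
    Px * (\big[Rmult/1]_p noise k (x p) (y p) * (f y - g y)))).
  by rewrite -big_distrr /= Rabs_mult Rabs_pos_eq //; apply: Rmult_le_compat_l.
by move=> y _; rewrite !Rmult_minus_distr_l !Rmult_assoc.
Qed.

Section SpacedIndices.
Variables (J : eqType) (s : seq J) (j0 : J) (L N T : nat).
Hypothesis L_gt0 : (0 < L)%N.
Hypothesis NL_le_T : (N * L <= T)%N.
Hypothesis T_le_size : (T <= size s)%N.

Definition spaced := [seq nth j0 s (i * L) | i <- iota 0 N].

Lemma spaced_lt i : (i < N)%N -> (i * L < T)%N.
Proof. by move=> iN; apply: leq_trans NL_le_T; rewrite ltn_mul2r iN andbT. Qed.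

Lemma uniq_spaced : uniq s -> uniq spaced.
Proof.
move=> us; rewrite map_inj_in_uniq ?iota_uniq // => i i'.
rewrite !mem_iota !add0n => /andP [_ iN] /andP [_ i'N] /eqP.
have size_lt i1 : (i1 < N)%N -> (i1 * L < size s)%N.
  by move=> h; exact: leq_trans (spaced_lt h) T_le_size.
rewrite nth_uniq ?size_lt // eqn_mul2r eqn0Ngt L_gt0 /=; exact/eqP.
Qed.

Lemma spaced_in_take j : j \in spaced -> j \in take T s.
Proof.
case/mapP => i; rewrite mem_iota add0n => /andP [_ iN] ->.
rewrite -(nth_take j0 (spaced_lt iN)); apply: mem_nth.
by rewrite size_take_min leq_min spaced_lt //= (leq_trans (spaced_lt iN)).
Qed.

End SpacedIndices.

Lemma halfspace_trunc_sub_abs_le k m (w : 'I_k -> 'I_m -> R) theta r T y :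
  Rabs (halfspace (w_tilde w r T) theta y - halfspace w theta y)
  <= b2R (disagree w theta r T y).
Proof.
rewrite /disagree; case: Req_EM_T => [e | _] /=.
  by rewrite e Rminus_diag Rabs_R0; lra.
by rewrite /halfspace /sgn; do 2 case: Rle_dec => ? /=; rewrite /Rabs;
  case: Rcase_abs => ?; lra.
Qed.

Lemma noisy_disagree_le k m (w : 'I_k -> 'I_m -> R) theta r T
    (A : seq ('I_k * 'I_m)) (x : {ffun 'I_k * 'I_m -> bool}) :
  (2 <= k)%N -> uniq A -> determined_off A (disagree w theta r T) ->
  Rabs (\big[Rplus/0]_(y : {ffun 'I_k * 'I_m -> bool})
          (\big[Rmult/1]_p noise k (x p) (y p) *
           (halfspace (w_tilde w r T) theta y - halfspace w theta y)))
  <= (1 - / INR k ^ 2 * / 2) ^ size A.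
Proof.
move=> hk uA dA; apply: Rle_trans (sumR_abs_le _ _ _) _.
pose q p c := noise k (x p) c.
have q_ge0 p c : 0 <= q p c by apply: noise_ge0.
apply: Rle_trans (prod_mass_determined_off_le q_ge0 (fun p => noise_sum1 k (x p))
  (fun p c => noise_le hk (x p) c) uA dA).
apply: sumR_le => y _; have hy : 0 <= prod_mass q y by apply: prod_mass_ge0.
rewrite Rabs_mult Rabs_pos_eq //.
by apply: Rmult_le_compat_l => //; apply: halfspace_trunc_sub_abs_le.
Qed.

Lemma disagree_determined_off_chosen k m (w : 'I_k -> 'I_m -> R) theta r :
  (2 <= k)%N -> (1 <= m)%N -> t_of k m < INR (size (C_set (tau_of k) (w r))) ->
  exists2 A : seq ('I_k * 'I_m),
    uniq A /\ size A = N_of k & determined_off A (disagree w theta r (T_of k m)).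
Proof.
move=> hk hm hr; have [tau_gt0 tau_small] := tau_bounds hk.
have hL := L_ge1 hk; have hNL := NL_le_T hk hm; have hTt := T_le_t hk hm.
have hLdec := L_decay hk; have hTdec := T_decay hk hm; have hsum := chosen_weight_le1 hk.
set tau := tau_of k in hr tau_gt0 tau_small hLdec hTdec hsum *.
set T := T_of k m in hNL hTt hTdec *; set L := L_of k in hL hNL hLdec hTdec *.
set sl := sorted_idx (w r); pose j0 : 'I_m := Ordinal hm.
have hTcrit : (T < crit_pos tau (w r))%N.
  by rewrite -size_C_set; apply/ltP; apply: INR_lt; lra.
have hTsl : (T < size sl)%N.
  by rewrite size_sorted_idx; exact: leq_trans hTcrit (crit_pos_le _ _).
have not_crit p : (p <= T)%N -> tau ^ 2 * sqtail sl (w r) p < abs_at sl (w r) j0 p ^ 2.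
  by move=> hp; apply: before_crit_pos; [lra | exact: leq_ltn_trans hTcrit].
have us : uniq (spaced sl j0 L (N_of k)).
  exact: uniq_spaced hL hNL (ltnW hTsl) (sorted_idx_uniq _).
exists [seq (r, j) | j <- spaced sl j0 L (N_of k)].
  split; last by rewrite !size_map size_iota.
  by rewrite map_inj_uniq // => ? ? [].
have tau_ge0 : 0 <= tau by lra.
apply: (disagree_determined_off us (spaced_in_take hL hNL (ltnW hTsl)) tau_ge0 _ _ hsum).
- move=> s u su uN; apply: (abs_at_lacunary _ _ hTsl not_crit hLdec); try lra.
    by rewrite -mulSnr leq_mul2r su orbT.
  exact: ltnW (spaced_lt hL hNL uN).
- move=> s sN; apply: (l1_tail_le _ _ hTsl not_crit) => //; try lra.
  + by apply: (le_INR 1 m); apply/leP.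
  + by rewrite size_sorted_idx; lra.
  + exact: ltnW (spaced_lt hL hNL sN).
  + by apply: hTdec; rewrite -mulSnr leq_mul2r sN orbT.
Qed.

Theorem lemma4p8 (k m : nat) (hk : (2 <= k)%N) (hm : (1 <= m)%N)
  (D : bool -> {ffun 'I_k -> bool} -> R)
  (hD0 : forall b x, Rle R0 (D b x))
  (hD1 : forall b, \big[Rplus/R0]_(x : {ffun 'I_k -> bool}) D b x = R1)
  (w : 'I_k -> 'I_m -> R) (theta : R) (r : 'I_k)
  (hr : Rgt (INR (size (C_set (tau_of k) (w r)))) (t_of k m))
  (b : bool) :
  Rle (Rabs (Rminus
          (Enoisy (D b)
             (halfspace (w_tilde w r (Z.to_nat (Rfloor (t_of k m)))) theta))
          (Enoisy (D b) (halfspace w theta))))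
      (Rinv (Rsqr (INR k))).
Proof.
have [A [uA sA] dA] := disagree_determined_off_chosen theta hk hm hr.
apply: Enoisy_sub_abs_le (hD0 b) (hD1 b) _ => x.
apply: Rle_trans (noisy_disagree_le x hk uA dA) _.
by rewrite sA; apply: noise_pow_N_le.
Qed.
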